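(* If $\alpha$ is irrational with partial quotients bounded in average, then $|A_\alpha\cap[n]|\gg\sqrt{n/\log n}$ as $n\to\infty$ (implicit constant depending on $\alpha$).
   Context: $[n]=\{1,\dots,n\}$; $\{x\}$ is the fractional part of $x$. For irrational $\alpha$ and $k\ge1$, $B_\alpha(k)=|\{1\le q\le k:\{q\alpha\}\le\{k\alpha\}\}|$, and $A_\alpha=\{B_\alpha(k):k\ge1\}$. If $\alpha=[a_0;a_1,a_2,\dots]$, its partial quotients are bounded in average if there is $B$ with $a_1+\dots+a_m\le Bm$ for all $m\ge1$. *)

From HB Require Import structures.
From mathcomp Require Import all_boot all_order all_algebra.
From mathcomp Require Import all_classical all_reals all_analysis.
Set Implicit Arguments. Unset Strict Implicit. Unset Printing Implicit Defensive.
Import Order.TTheory GRing.Theory Num.Theory.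
Local Open Scope ring_scope.

Section Defs.
Variable R : realType.

Definition frac (x : R) : R := x - (Num.floor x)%:~R.

Fixpoint cf_x (alpha : R) (k : nat) : R :=
  match k with
  | 0 => alpha
  | k'.+1 => (frac (cf_x alpha k'))^-1
  end.

Definition pq (alpha : R) (k : nat) : int := Num.floor (cf_x alpha k).

Definition pq_bounded_in_average (alpha : R) : Prop :=
  exists B : R, forall m : nat, (1 <= m)%N ->
    \sum_(1 <= i < m.+1) (pq alpha i)%:~R <= B * m%:R.

Definition Bal (alpha : R) (k : nat) : nat :=
  count (fun q : nat => frac (q%:R * alpha) <= frac (k%:R * alpha)) (iota 1 k).

Definition inA (alpha : R) (m : nat) : Prop :=
  exists k : nat, (1 <= k)%N /\ Bal alpha k = m.

Definition cardA_upto (alpha : R) (n : nat) : nat :=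
  #|[set m : 'I_n.+1 | (0 < val m)%N && `[< inA alpha (val m) >]]|.

End Defs.

From Pilot Require Import Defs.
From HB Require Import structures.
From mathcomp Require Import all_boot all_order all_algebra.
From mathcomp Require Import all_classical all_reals all_analysis.
From mathcomp Require Import ring lra zify.
Import Order.TTheory GRing.Theory Num.Theory.
Local Open Scope ring_scope.
Set Implicit Arguments. Unset Strict Implicit.

(* If h is the denominator of an odd-index convergent of alpha, then
   h alpha = p + e with 0 < e, and for i = 1, ..., J with J e < 1 the
   fractional parts {i h alpha} = i e increase with i.  Hence the values
   B_alpha(i h) increase strictly and give J distinct elements of A_alpha
   below J h.  Taking h as the largest such denominator not exceeding
   M ~ sqrt(n log n), the denominators at least double every two steps and
   the next partial quotient is O(log n) by the bounded average, so
   e M = O(log n); then J ~ min(n / M, M / log n) ~ sqrt(n / log n). *)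

Local Notation frac := Defs.frac.

Section FracPart.
Variable R : realType.
Implicit Types (x y : R) (z : int).

Lemma frac_ge0 x : 0 <= frac x.
Proof. by rewrite /frac subr_ge0 floor_le. Qed.

Lemma frac_lt1 x : frac x < 1.
Proof. by rewrite /frac ltrBlDr addrC; have := floorD1_gt x; rewrite intrD. Qed.

Lemma frac_intrD z y : 0 <= y < 1 -> frac (z%:~R + y) = y.
Proof.
move=> /andP[y0 y1]; rewrite /frac (@floor_def _ _ z); first by rewrite addrC addKr.
by rewrite intrD lerDl y0 ltrD2l.
Qed.

End FracPart.

Section ContinuedFraction.
Variables (R : realType) (alpha : R).
Local Notation x := (cf_x alpha).
Local Notation a := (pq alpha).

Lemma rational_cf_x k : rational (x k) -> rational alpha.
Proof.
elim: k => [//|k IHk] /= [q _ xq]; apply: IHk.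
exists (q^-1 + (Num.floor (x k))%:~R) => //.
by rewrite rmorphD /= fmorphV /= xq invrK ratr_int /frac subrK.
Qed.

Hypothesis alpha_irr : irrational alpha.

Lemma frac_cf_x_gt0 k : 0 < frac (x k).
Proof.
rewrite lt_def frac_ge0 andbT; apply: contra_notN alpha_irr.
rewrite /frac => /eqP/subr0_eq xk; apply: (@rational_cf_x k).
by exists (Num.floor (x k))%:~R; rewrite ?ratr_int.
Qed.

Lemma cf_x_gt1 k : 1 < x k.+1.
Proof. by rewrite /= invf_gt1 ?frac_cf_x_gt0 ?frac_lt1. Qed.

Lemma cf_x_gt0 k : 0 < x k.+1.
Proof. exact: lt_trans (cf_x_gt1 k). Qed.

Lemma frac_cf_xE k : frac (x k) = (x k.+1)^-1.
Proof. by rewrite /= invrK. Qed.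

Lemma pq_ge1 k : 1 <= a k.+1.
Proof. by rewrite /pq floor_ge_int ltW ?cf_x_gt1. Qed.

Lemma absz_pq_gt0 k : (0 < `|a k.+1|)%N.
Proof. by have := pq_ge1 k; lia. Qed.

Lemma natr_absz_pq k : (`|a k.+1|%N)%:R = (a k.+1)%:~R :> R.
Proof. by rewrite natr_absz ger0_norm // (le_trans _ (pq_ge1 k)). Qed.

(* Indices are shifted by one: [cf_den n.+1] and [cf_num n.+1] are the
   denominator and numerator of the n-th convergent of alpha. *)
Fixpoint cf_den n : nat :=
  match n with
  | 0 => 0
  | 1 => 1
  | (m.+1 as k).+1 => `|a k| * cf_den k + cf_den m
  end.

Fixpoint cf_num n : int :=
  match n with
  | 0 => 1
  | 1 => a 0
  | (m.+1 as k).+1 => a k * cf_num k + cf_num m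
  end.

Definition cf_err n : R := \prod_(i < n) (x i.+1)^-1.

Lemma natr_cf_denSS n :
  (cf_den n.+2)%:R = (a n.+1)%:~R * (cf_den n.+1)%:R + (cf_den n)%:R :> R.
Proof. by rewrite /= natrD natrM natr_absz_pq. Qed.

Lemma cf_errS n : cf_err n.+1 = cf_err n * (x n.+1)^-1.
Proof. by rewrite /cf_err big_ord_recr. Qed.

Lemma cf_err_gt0 n : 0 < cf_err n.
Proof. by apply: prodr_gt0 => i _; rewrite invr_gt0 cf_x_gt0. Qed.

Lemma cf_errSS n : cf_err n.+2 = cf_err n - (a n.+1)%:~R * cf_err n.+1.
Proof.
rewrite !cf_errS -(frac_cf_xE n.+1) /frac -/(a n.+1).
have := cf_x_gt0 n; move: (x n.+1) ((a n.+1)%:~R) (cf_err n) => y b r y0.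
by field; rewrite gt_eqF.
Qed.

Lemma cf_den_approx n :
  (cf_den n)%:R * alpha - (cf_num n)%:~R = (-1) ^+ n.+1 * cf_err n.
Proof.
pose E k := (cf_den k)%:R * alpha - (cf_num k)%:~R = (-1) ^+ k.+1 * cf_err k.
suff: E n /\ E n.+1 by case.
elim: n => [|m [IHm IHm1]]; rewrite /E.
  rewrite /cf_err big_ord0 big_ord1 -frac_cf_xE /frac /=; split; ring.
split=> //; rewrite natr_cf_denSS /= intrD intrM cf_errSS.
have -> : (cf_num m)%:~R = (cf_den m)%:R * alpha - (-1) ^+ m.+1 * cf_err m.
  by rewrite -IHm; ring.
have -> : (cf_num m.+1)%:~R = (cf_den m.+1)%:R * alpha - (-1) ^+ m.+2 * cf_err m.+1.
  by rewrite -IHm1; ring.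
by rewrite !exprS; ring.
Qed.

Lemma cf_den_err n : (cf_den n.+1)%:R * cf_err n + (cf_den n)%:R * cf_err n.+1 = 1 :> R.
Proof.
elim: n => [|n IHn]; first by rewrite /cf_err big_ord0 mul1r mul0r addr0.
by rewrite natr_cf_denSS cf_errSS -[X in _ = X]IHn; ring.
Qed.

Lemma cf_den_le n : (cf_den n <= cf_den n.+1)%N.
Proof. by case: n => //= n; rewrite (leq_trans _ (leq_addr _ _)) ?leq_pmull ?absz_pq_gt0. Qed.

Lemma cf_den_gt0 n : (0 < cf_den n.+1)%N.
Proof. by elim: n => // n IHn; apply: leq_trans IHn (cf_den_le _). Qed.

Lemma cf_den_double n : (2 * cf_den n <= cf_den n.+2)%N.
Proof.
by rewrite /= mul2n -addnn leq_add2r (leq_trans (cf_den_le n)) ?leq_pmull ?absz_pq_gt0.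
Qed.

Lemma exp2_le_cf_den j : (2 ^ j <= cf_den j.*2.+1)%N.
Proof.
elim: j => // j IHj; rewrite expnS doubleS.
exact: leq_trans (leq_mul (leqnn 2) IHj) (cf_den_double _).
Qed.

Lemma cf_den_le_pq n :
  (cf_den n.+2)%:R <= ((a n.+1)%:~R + 1) * (cf_den n.+1)%:R :> R.
Proof. by rewrite natr_cf_denSS mulrDl mul1r lerD2l ler_nat cf_den_le. Qed.

Lemma cf_den_odd j :
  (cf_den j.*2.+1)%:R * alpha = (cf_num j.*2.+1)%:~R + cf_err j.*2.+1.
Proof.
have := cf_den_approx j.*2.+1.
by rewrite -addn2 exprD -mul2n exprM sqrrN !expr1n !mul1r => <-; ring.
Qed.

(* Choose the last odd convergent with denominator at most [M]: the next odd
   denominator exceeds [M], and it is at most [(a + 1)] times the intermediate one. *)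
Lemma cf_odd_approx M : (0 < M)%N -> exists j,
  (2 ^ j <= cf_den j.*2.+1 <= M)%N /\
  cf_err j.*2.+1 * M%:R < (a j.*2.+2)%:~R + 1.
Proof.
move=> M0.
have exP : exists j, (cf_den j.*2.+1 <= M)%N by exists 0%N.
have ubP j : (cf_den j.*2.+1 <= M)%N -> (j <= M)%N.
  move=> jM; apply: ltnW; apply: leq_trans (ltn_expl j (isT : 1 < 2)%N) _.
  exact: leq_trans (exp2_le_cf_den j) jM.
have [j jM jmax] := ex_maxnP exP ubP.
exists j; split; first by rewrite exp2_le_cf_den.
have Mlt : M%:R < (cf_den j.*2.+3)%:R :> R.
  by rewrite ltr_nat ltnNge; apply/negP => /(jmax j.+1); rewrite ltnn.
have a1 : 0 <= (a j.*2.+2)%:~R + 1 :> R.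
  by rewrite addr_ge0 // ler0z (le_trans _ (pq_ge1 _)).
have err_den_lt1 : cf_err j.*2.+1 * (cf_den j.*2.+2)%:R < 1.
  rewrite -[X in _ < X](cf_den_err j.*2.+1) [X in X < _]mulrC ltrDl mulr_gt0 ?cf_err_gt0 //.
  by rewrite ltr0n cf_den_gt0.
apply: lt_le_trans (_ : cf_err j.*2.+1 * (cf_den j.*2.+3)%:R <= _).
  by rewrite ltr_pM2l ?cf_err_gt0.
apply: le_trans (ler_wpM2l (ltW (cf_err_gt0 _)) (cf_den_le_pq _)) _.
by rewrite mulrCA ler_piMr // ltW.
Qed.

End ContinuedFraction.

Section Logarithm.
Variable R : realType.

Lemma half_le_ln2 : 1 / 2 <= ln (2 : R).
Proof.
rewrite -[X in X <= _]expRK ler_ln ?posrE ?expR_gt0 //.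
have := expR_ge1Dx (- (1 / 2) : R); rewrite expRN.
have := expR_gt0 (1 / 2 : R); move: (expR _) => E E0.
by rewrite -[E^-1]div1r ler_pdivlMr // => h; lra.
Qed.

Lemma le_ln_exp2 j : j%:R <= 2 * ln (2 ^+ j : R).
Proof.
rewrite lnXn // -[ln 2 *+ j]mulr_natr mulrA -[X in X <= _]mul1r ler_wpM2r //.
by have := half_le_ln2; lra.
Qed.

Lemma ln_le_exp2 j (n : nat) : (2 ^ j <= n)%N -> j%:R <= 2 * ln (n%:R : R).
Proof.
move=> jn; apply: le_trans (le_ln_exp2 j) _; rewrite ler_pM2l // -natrX.
have n0 : (0 < n)%N by apply: leq_trans jn; rewrite expn_gt0.
by rewrite ler_ln ?posrE ?ltr0n ?ler_nat ?expn_gt0.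
Qed.

End Logarithm.

Section BoundedAverage.
Variables (R : realType) (alpha B : R).
Hypothesis alpha_irr : irrational alpha.
Hypothesis pq_avg : forall m : nat, (1 <= m)%N ->
  \sum_(1 <= i < m.+1) (pq alpha i)%:~R <= B * m%:R.

Lemma pq_le_avg m : (pq alpha m.+1)%:~R <= B * m.+1%:R.
Proof.
apply: le_trans (pq_avg (ltn0Sn m)); rewrite big_nat_recr //= lerDr.
rewrite big_nat sumr_ge0 // => -[//|i] _.
by rewrite ler0z (le_trans _ (pq_ge1 alpha_irr i)).
Qed.

Lemma avg_bound_ge1 : 1 <= B.
Proof. by have := pq_le_avg 0; rewrite mulr1; apply: le_trans; rewrite ler1z pq_ge1. Qed.

Lemma exists_small_frac_mul (n M : nat) : 1 <= ln (n%:R : R) -> (0 < M <= n)%N ->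
  exists h (p : int) (e : R), [/\ (0 < h <= M)%N, h%:R * alpha = p%:~R + e,
    0 < e & e * M%:R < (6 * B + 1) * ln n%:R].
Proof.
move=> L1 /andP[M0 Mn].
have [j [/andP[jden denM] errM]] := cf_odd_approx alpha_irr M0.
exists (cf_den alpha j.*2.+1), (cf_num alpha j.*2.+1), (cf_err alpha j.*2.+1).
split; [by rewrite cf_den_gt0 | exact: cf_den_odd | exact: cf_err_gt0 |].
have jL : j%:R <= 2 * ln (n%:R : R).
  by apply: ln_le_exp2; rewrite (leq_trans jden) // (leq_trans denM).
have := pq_le_avg j.*2.+1; have := avg_bound_ge1.
have -> : j.*2.+2%:R = 2 * j%:R + 2 :> R by rewrite -addn2 -mul2n natrD natrM.
by move=> B1 aB; apply: lt_le_trans errM _; nra.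
Qed.

End BoundedAverage.

Section Counting.
Variables (R : realType) (alpha : R).

Lemma Bal_le k : (Bal alpha k <= k)%N.
Proof. by rewrite /Bal (leq_trans (count_size _ _)) ?size_iota. Qed.

Lemma Bal_gt0 k : (0 < k)%N -> (0 < Bal alpha k)%N.
Proof.
move=> k0; rewrite /Bal -has_count; apply/hasP; exists k => //.
by rewrite mem_iota k0 add1n ltnSn.
Qed.

(* [Bal alpha k'] counts every [q <= k] counted by [Bal alpha k], and [q = k'] too. *)
Lemma Bal_lt k k' : (k < k')%N -> frac (k%:R * alpha) < frac (k'%:R * alpha) ->
  (Bal alpha k < Bal alpha k')%N.
Proof.
move=> kk' frac_lt; rewrite /Bal.
have -> : iota 1 k' = iota 1 k ++ iota k.+1 (k' - k) by rewrite -iotaD subnKC // ltnW.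
rewrite count_cat -addn1 leq_add //.
  by apply: sub_count => q /= /le_trans; apply; rewrite ltW.
rewrite -has_count; apply/hasP; exists k' => //.
by rewrite mem_iota kk' addSn subnKC ?ltnSn // ltnW.
Qed.

Lemma cardA_upto_ge (n : nat) (s : seq nat) : uniq s ->
  {in s, forall m, (0 < m <= n)%N /\ inA alpha m} ->
  (size s <= cardA_upto alpha n)%N.
Proof.
move=> s_uniq sA; pose t := [seq inord m : 'I_n.+1 | m <- s].
have t_uniq : uniq t.
  rewrite map_inj_in_uniq // => m m' /sA[/andP[_ mn] _] /sA[/andP[_ m'n] _].
  by move/(congr1 val); rewrite /= !inordK.
rewrite -(size_map (fun m => inord m : 'I_n.+1)) -(card_uniqP t_uniq).
apply: subset_leq_card; apply/fintype.subsetP => _ /mapP[m /sA[/andP[m0 mn] mA] ->].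
by rewrite inE /= inordK // m0; apply/asboolP.
Qed.

Lemma cardA_upto_ge_progression h (p : int) (e : R) (J n : nat) :
  (0 < h)%N -> h%:R * alpha = p%:~R + e -> 0 < e -> J%:R * e < 1 ->
  (J * h <= n)%N -> (J <= cardA_upto alpha n)%N.
Proof.
move=> h0 he e0 Je Jhn.
have frac_ih i : (i <= J)%N -> frac ((i * h)%:R * alpha) = i%:R * e.
  move=> iJ; rewrite natrM -mulrA he mulrDr -[i%:R]/((i%:Z)%:~R) -intrM.
  apply: frac_intrD; rewrite mulr_ge0 ?(ltW e0) ?ler0n //=.
  by apply: le_lt_trans Je; rewrite ler_pM2r // ler_nat.
rewrite -[X in (X <= _)%N](size_iota 1 J) -(size_map (fun i => Bal alpha (i * h))).
apply: cardA_upto_ge => [|m /mapP[i]].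
  rewrite (sorted_uniq ltn_trans ltnn) // sorted_map.
  apply: (@sub_in_sorted _ (mem (iota 1 J))); last exact: iota_ltn_sorted.
    move=> i i'; rewrite !mem_iota add1n !ltnS => /andP[_ iJ] /andP[_ i'J] ii'.
    apply: Bal_lt; first by rewrite ltn_pmul2r.
    by rewrite !frac_ih // ltr_pM2r // ltr_nat.
  exact: allss.
rewrite mem_iota add1n ltnS => /andP[i0 iJ] ->.
split; last by exists (i * h)%N; rewrite muln_gt0 i0.
rewrite Bal_gt0 ?muln_gt0 ?i0 //= (leq_trans (Bal_le _)) // (leq_trans _ Jhn) //.
by rewrite leq_mul2r iJ orbT.
Qed.

End Counting.

Section Asymptotics.
Variable R : realType.

Lemma ln_le_2sqrt (x : R) : 0 < x -> ln x <= 2 * Num.sqrt x.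
Proof.
move=> x0; have s0 : 0 < Num.sqrt x by rewrite sqrtr_gt0.
rewrite -{1}(sqr_sqrtr (ltW x0)) expr2 lnM ?posrE //.
by have := ln_sublinear s0; lra.
Qed.

Lemma sqrt_div_ln_large (A : R) : exists N : nat, forall n : nat, (N <= n)%N ->
  1 <= ln (n%:R : R) /\ A <= Num.sqrt (n%:R / ln n%:R).
Proof.
exists (Num.truncn (4 * A ^+ 4)).+4 => n nN.
have n4 : (4 <= n)%N by apply: leq_trans nN; lia.
have n0 : 0 < n%:R :> R by rewrite ltr0n (leq_trans _ n4).
have L1 : 1 <= ln (n%:R : R).
  apply: le_trans (_ : ln (2 ^+ 2) <= _).
    by have := le_ln_exp2 R 2; lra.
  by rewrite ler_ln ?posrE // -natrX ler_nat.
split=> //.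
have nA : 4 * A ^+ 4 <= n%:R.
  apply: le_trans (ltW (truncnS_gt _)) _; rewrite ler_nat.
  by apply: leq_trans nN; rewrite ltnS; do 3 apply: leqW.
have sqrt_nA : 2 * A ^+ 2 <= Num.sqrt n%:R.
  rewrite -(@ger0_norm _ (2 * A ^+ 2)); last by rewrite mulr_ge0 ?sqr_ge0.
  rewrite -sqrtr_sqr ler_sqrt //.
  suff -> : (2 * A ^+ 2) ^+ 2 = 4 * A ^+ 4 by []. 
  ring.
have := ln_le_2sqrt n0; have := sqr_sqrtr (ltW n0).
move: (Num.sqrt _) sqrt_nA => r rA rn Lr.
apply: le_trans (ler_norm A) _; rewrite -sqrtr_sqr ler_sqrt ?divr_ge0 //; last lra.
rewrite ler_pdivlMr; last lra.
by apply: le_trans (ler_wpM2l (sqr_ge0 A) Lr) _; nra.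
Qed.

(* With [s = sqrt (n / L)]: take [J] about [s / (2 K)] and [M = n %/ J]. *)
Lemma balanced_split (K L : R) (n : nat) : 1 <= K -> 1 <= L ->
  4 * K <= Num.sqrt (n%:R / L) -> exists J M : nat,
  [/\ (0 < M <= n)%N, (J * M <= n)%N, J%:R * (K * L) <= M%:R
    & Num.sqrt (n%:R / L) / (4 * K) <= J%:R].
Proof.
move=> K1 L1; set s := Num.sqrt _ => sK.
have K0 : 0 < K by lra.
have KL1 : 1 <= K * L by nra.
have s2L : s ^+ 2 * L = n%:R by rewrite sqr_sqrtr ?divfK ?gt_eqF ?divr_ge0 //; lra.
set u := s / (2 * K); have su : s = 2 * K * u by rewrite /u mulrC divfK ?gt_eqF //; lra.
have u2 : 2 <= u by rewrite ler_pdivlMr; lra.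
set J := Num.truncn u.
have Ju : J%:R <= u by rewrite truncn_le; lra.
have uJ : u < J%:R + 1 by rewrite natr1 truncnS_gt.
have J1 : 1 <= J%:R :> R by lra.
have J0 : (0 < J)%N by rewrite -(ltr_nat R); lra.
have Jn : J%:R * (J%:R * (K * L)) + J%:R <= n%:R.
  have KLK : K * L <= K ^+ 2 * L by rewrite expr2 -mulrA ler_peMl // mulr_ge0 //; lra.
  have JJ : J%:R * J%:R <= u ^+ 2 by rewrite expr2 ler_pM //; lra.
  rewrite -s2L su (_ : (2 * K * u) ^+ 2 * L = 4 * u ^+ 2 * (K ^+ 2 * L)); last by ring.
  by move: (K ^+ 2 * L) KLK => X KLX; nra.
have nM := ltn_ceil n J0; rewrite -(ltr_nat R) natrM -natr1 in nM.
have JKL : J%:R * (K * L) <= (n %/ J)%:R.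
  rewrite -(ler_pM2l (_ : 0 < J%:R)); last lra.
  by move: ((n %/ J)%:R) nM => M; nra.
exists J, (n %/ J)%N; split.
- by rewrite leq_div andbT -(ltr_nat R); nra.
- by rewrite mulnC leq_divM.
- exact: JKL.
- rewrite su (_ : 2 * K * u / (4 * K) = u / 2); [lra | by field; lra].
Qed.

End Asymptotics.

Theorem mainTheorem18 (R : realType) (alpha : R) :
  irrational alpha -> pq_bounded_in_average alpha ->
  exists c : R, 0 < c /\ exists N : nat, forall n : nat, (N <= n)%N ->
    c * Num.sqrt (n%:R / ln (n%:R : R)) <= (cardA_upto alpha n)%:R.
Proof.
move=> alpha_irr [B pq_avg].
pose K := 6 * B + 1.
have K1 : 1 <= K by have := avg_bound_ge1 alpha_irr pq_avg; rewrite /K; lra.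
exists (1 / (4 * K)); split; first by rewrite divr_gt0 //; lra.
have [N large] := sqrt_div_ln_large (4 * K).
exists N => n /large[L1 sK].
have [J [M [M0n JMn JKL sJ]]] := balanced_split K1 L1 sK.
have [h [p [e [/andP[h0 hM] he e0 eM]]]] := exists_small_frac_mul alpha_irr pq_avg L1 M0n.
have Je : J%:R * e < 1.
  have KL0 : 0 < K * ln n%:R by rewrite mulr_gt0 //; lra.
  rewrite -(ltr_pM2r KL0) mul1r; apply: le_lt_trans eM.
  by rewrite mulrAC mulrC ler_pM2l.
have hJn : (J * h <= n)%N by rewrite (leq_trans _ JMn) // leq_mul2l hM orbT.
apply: le_trans (_ : J%:R <= _); first by rewrite mul1r mulrC.
by rewrite ler_nat (cardA_upto_ge_progression h0 he e0 Je hJn).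
Qed.
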